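(* Let $\preceq$ be a left quasi-order on a group $G$. If $a,b,c\in G$ satisfy $[a,b]=a^{-1}b^{-1}ab=c^{r}$ for some $r\in\mathbb{Z}\setminus\{0\}$, and $c$ commutes with both $a$ and $b$, then either $c\ll a$ or $c\ll b$.
   Context: A left quasi-order on a group $G$ is a binary relation $\preceq$ on $G$ such that: (1) for all $g,h\in G$, $g\preceq h$ or $h\preceq g$; (2) for all $f,g,h\in G$, $f\preceq g$ and $g\preceq h$ imply $f\preceq h$; (3) for all $f,g,h\in G$, $g\preceq h$ implies $fg\preceq fh$. For $g,h\in G$ one writes $g\ll h$ if either $g^k\preceq h$ for all $k\in\mathbb{Z}$, or $g^k\preceq h^{-1}$ for all $k\in\mathbb{Z}$. *)

From Stdlib Require Import ZArith.

Record Group := {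
  carrier :> Type;
  gmul : carrier -> carrier -> carrier;
  gone : carrier;
  ginv : carrier -> carrier;
  gmul_assoc : forall x y z, gmul x (gmul y z) = gmul (gmul x y) z;
  gmul_1l : forall x, gmul gone x = x;
  gmul_1r : forall x, gmul x gone = x;
  gmul_Vl : forall x, gmul (ginv x) x = gone;
  gmul_Vr : forall x, gmul x (ginv x) = gone
}.

Arguments gmul {g} _ _.
Arguments gone {g}.
Arguments ginv {g} _.

Fixpoint npow {G : Group} (g : G) (n : nat) : G :=
  match n with
  | O => gone
  | S n' => gmul g (npow g n')
  end.

Definition zpow {G : Group} (g : G) (k : Z) : G :=
  match k with
  | Z0 => gone
  | Zpos p => npow g (Pos.to_nat p)
  | Zneg p => ginv (npow g (Pos.to_nat p))
  end.

Definition comm {G : Group} (a b : G) : G :=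
  gmul (gmul (gmul (ginv a) (ginv b)) a) b.

Definition left_quasi_order {G : Group} (le : G -> G -> Prop) : Prop :=
  (forall g h : G, le g h \/ le h g) /\
  (forall f g h : G, le f g -> le g h -> le f h) /\
  (forall f g h : G, le g h -> le (gmul f g) (gmul f h)).

Definition much_less {G : Group} (le : G -> G -> Prop) (g h : G) : Prop :=
  (forall k : Z, le (zpow g k) h) \/ (forall k : Z, le (zpow g k) (ginv h)).

From Stdlib Require Import ZArith Lia Classical.

(* Suppose neither c << a nor c << b.  Then c^(-k2) <= a <= c^k1 and
   c^(-l2) <= b <= c^l1 for some exponents, where moreover c^(k1 + k2) is not
   below 1.  Because c commutes with a and b, such bounds can be multiplied, so
   the commutator [a^N, b^N] = c^(N^2 r) lies between c^(-N M) and c^(N M),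
   with M = k1 + k2 + l1 + l2.  On the other hand i, j |-> c^i <= c^j is a
   translation-invariant total preorder on Z which is not trivial, and every
   such preorder is contained in the usual order of Z or in its reverse.  Hence
   |N^2 r| <= N |M| for all N, which fails for N = |M| + 1. *)

Local Open Scope Z_scope.

Section ShiftInvariantPreorderZ.
Variable R : Z -> Z -> Prop.
Hypothesis R_total : forall i j, R i j \/ R j i.
Hypothesis R_trans : forall i j k, R i j -> R j k -> R i k.
Hypothesis R_shift : forall k i j, R i j -> R (k + i) (k + j).

Lemma Zpreorder_refl i : R i i.
Proof. now destruct (R_total i i). Qed.

Lemma Zpreorder_nonneg : R 0 1 -> forall n, 0 <= n -> R 0 n.
Proof.
  intros H01; apply natlike_ind; [apply Zpreorder_refl |].
  intros n _ IHn; apply (R_trans _ n); [exact IHn |].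
  pose proof (R_shift n _ _ H01) as H.
  now rewrite Z.add_0_r, Z.add_1_r in H.
Qed.

Lemma Zpreorder_multiples d : R d 0 -> forall n, 0 <= n -> R (n * d) 0.
Proof.
  intros Hd; apply natlike_ind; [apply Zpreorder_refl |].
  intros n _ IHn; apply (R_trans _ d); [| exact Hd].
  pose proof (R_shift d _ _ IHn) as H.
  now rewrite Z.add_0_r, Z.add_comm, <- Z.mul_succ_l in H.
Qed.

Lemma Zpreorder_collapse d : R 0 1 -> 0 < d -> R d 0 -> forall z, R z 0.
Proof.
  intros H01 Hd HdR z; destruct (Z_le_gt_dec z 0) as [Hz | Hz].
  - assert (Hz' : 0 <= - z) by lia.
    pose proof (R_shift z _ _ (Zpreorder_nonneg H01 _ Hz')) as H.
    now rewrite Z.add_0_r, Z.add_opp_diag_r in H.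
  - apply (R_trans _ (z * d)); [| apply Zpreorder_multiples; [exact HdR | lia]].
    assert (Hzd : 0 <= z * d - z) by nia.
    pose proof (R_shift z _ _ (Zpreorder_nonneg H01 _ Hzd)) as H.
    now rewrite Z.add_0_r, Zplus_minus in H.
Qed.

Lemma Zpreorder_increasing K : R 0 1 -> ~ R K 0 -> forall x y, R x y -> x <= y.
Proof.
  intros H01 HK x y Hxy; apply Z.nlt_ge; intros Hyx; apply HK.
  apply (Zpreorder_collapse (x - y)); [exact H01 | lia |].
  pose proof (R_shift (- y) _ _ Hxy) as H.
  now rewrite Z.add_opp_diag_l, Z.add_comm in H.
Qed.

End ShiftInvariantPreorderZ.

Lemma Zpreorder_dichotomy (R : Z -> Z -> Prop) K :
  (forall i j, R i j \/ R j i) ->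
  (forall i j k, R i j -> R j k -> R i k) ->
  (forall k i j, R i j -> R (k + i) (k + j)) ->
  ~ R K 0 ->
  (forall x y, R x y -> x <= y) \/ (forall x y, R x y -> y <= x).
Proof.
  intros Htot Htrans Hshift HK; destruct (Htot 0 1) as [H01 | H10].
  - left; exact (Zpreorder_increasing R Htot Htrans Hshift K H01 HK).
  - right; intros x y Hxy.
    set (Rmirror i j := R (- i) (- j)).
    enough (- x <= - y) by lia.
    apply (Zpreorder_increasing Rmirror) with (K := - K).
    + intros i j; apply Htot.
    + intros i j k; apply Htrans.
    + intros k i j H; unfold Rmirror; rewrite !Z.opp_add_distr; now apply Hshift.
    + exact (Hshift (-1) _ _ H10).
    + unfold Rmirror; now rewrite Z.opp_involutive.
    + unfold Rmirror; now rewrite !Z.opp_involutive.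
Qed.

Lemma Zabs_linear_lt_quadratic n m r :
  r <> 0 -> Z.abs m < n -> Z.abs (n * m) < Z.abs (n * n * r).
Proof.
  intros Hr Hn; rewrite !Z.abs_mul, (Z.abs_eq n) by lia.
  assert (1 <= Z.abs r) by lia.
  nia.
Qed.

Definition commute {G : Group} (x y : G) : Prop := gmul x y = gmul y x.

Section GroupFacts.
Context {G : Group}.
Implicit Types x y z : G.
Local Infix "·" := (@gmul G) (at level 40, left associativity).

Lemma mulKg x y : ginv x · (x · y) = y.
Proof. now rewrite gmul_assoc, gmul_Vl, gmul_1l. Qed.

Lemma mulKVg x y : x · (ginv x · y) = y.
Proof. now rewrite gmul_assoc, gmul_Vr, gmul_1l. Qed.

Lemma inv_unique x y : x · y = gone -> ginv x = y.
Proof. intros Hxy. now rewrite <- (mulKg x y), Hxy, gmul_1r. Qed.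

Lemma invMg x y : ginv (x · y) = ginv y · ginv x.
Proof. apply inv_unique. rewrite <- !gmul_assoc. now rewrite mulKVg, gmul_Vr. Qed.

Lemma invgK x : ginv (ginv x) = x.
Proof. apply inv_unique, gmul_Vl. Qed.

Lemma invg1 : ginv (@gone G) = gone.
Proof. apply inv_unique, gmul_1l. Qed.

Lemma commute_sym x y : commute x y -> commute y x.
Proof. now unfold commute. Qed.

Lemma commute_mulr x y z : commute x y -> commute x z -> commute x (y · z).
Proof.
  unfold commute; intros Hy Hz.
  now rewrite gmul_assoc, Hy, <- !gmul_assoc, Hz.
Qed.

Lemma commute_invr x y : commute x y -> commute x (ginv y).
Proof.
  unfold commute; intros Hxy.
  rewrite <- (gmul_1r _ (ginv y · x)), <- (gmul_Vr _ y), <- !gmul_assoc.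
  now rewrite (gmul_assoc _ x y), Hxy, <- gmul_assoc, mulKg.
Qed.

Lemma commute_npowr x y n : commute x y -> commute x (npow y n).
Proof.
  intros Hxy; induction n as [|n IHn]; simpl.
  - unfold commute; now rewrite gmul_1l, gmul_1r.
  - now apply commute_mulr.
Qed.

Lemma commute_zpowr x y k : commute x y -> commute x (zpow y k).
Proof.
  intros Hxy; destruct k; simpl.
  - unfold commute; now rewrite gmul_1l, gmul_1r.
  - now apply commute_npowr.
  - now apply commute_invr, commute_npowr.
Qed.

Lemma commute_zpowl x y k : commute x y -> commute (zpow x k) y.
Proof. intros Hxy; apply commute_sym, commute_zpowr, commute_sym, Hxy. Qed.

Lemma npowSr x n : npow x (S n) = npow x n · x.
Proof. exact (commute_npowr x x n eq_refl). Qed.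

Lemma zpow_of_nat x n : zpow x (Z.of_nat n) = npow x n.
Proof. destruct n as [|n]; simpl; [reflexivity|]. now rewrite SuccNat2Pos.id_succ. Qed.

Lemma zpow_opp x k : zpow x (- k) = ginv (zpow x k).
Proof. destruct k; simpl; [now rewrite invg1 | reflexivity | now rewrite invgK]. Qed.

Lemma zpow_succ x k : zpow x (Z.succ k) = x · zpow x k.
Proof.
  destruct (Z_le_gt_dec 0 k) as [Hk | Hk].
  - rewrite <- (Z2Nat.id k Hk), <- Nat2Z.inj_succ, !zpow_of_nat. reflexivity.
  - set (n := Z.to_nat (- k - 1)).
    replace k with (- Z.of_nat (S n)) by lia.
    replace (Z.succ (- Z.of_nat (S n))) with (- Z.of_nat n) by lia.
    now rewrite !zpow_opp, !zpow_of_nat, npowSr, invMg, mulKVg.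
Qed.

Lemma zpow_pred x k : zpow x (Z.pred k) = ginv x · zpow x k.
Proof. rewrite <- (Z.succ_pred k) at 2. now rewrite zpow_succ, mulKg. Qed.

Lemma zpow_add x i j : zpow x (i + j) = zpow x i · zpow x j.
Proof.
  induction i as [|i IHi|i IHi] using Z.peano_ind; simpl.
  - now rewrite gmul_1l.
  - now rewrite Z.add_succ_l, !zpow_succ, IHi, gmul_assoc.
  - now rewrite Z.add_pred_l, !zpow_pred, IHi, gmul_assoc.
Qed.

Lemma comm_eq_iff x y z : comm x y = z <-> x · y = y · (x · z).
Proof.
  unfold comm; split; intros H.
  - now rewrite <- H, <- !gmul_assoc, !mulKVg.
  - now rewrite <- !gmul_assoc, H, !mulKg.
Qed.

Section CentralCommutator.
Variable c : G.

Lemma mul_npowr_swap x y s n :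
  commute c y -> x · y = y · (x · zpow c s) ->
  x · npow y n = npow y n · (x · zpow c (Z.of_nat n * s)).
Proof.
  intros Hcy Hswap; induction n as [|n IHn].
  - simpl; now rewrite gmul_1l, !gmul_1r.
  - cbn [npow]; rewrite Nat2Z.inj_succ, Z.mul_succ_l, zpow_add.
    rewrite gmul_assoc, Hswap, <- !gmul_assoc.
    rewrite (commute_zpowl _ _ s (commute_npowr _ _ n Hcy)).
    now rewrite (gmul_assoc _ x), IHn, <- !gmul_assoc.
Qed.

Lemma npowl_mul_swap x y s m :
  commute c x -> x · y = y · (x · zpow c s) ->
  npow x m · y = y · (npow x m · zpow c (Z.of_nat m * s)).
Proof.
  intros Hcx Hswap; induction m as [|m IHm].
  - simpl; now rewrite gmul_1l, !gmul_1r.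
  - cbn [npow]; rewrite Nat2Z.inj_succ, Z.mul_succ_l, Z.add_comm, zpow_add.
    rewrite <- gmul_assoc, IHm, !gmul_assoc, Hswap, <- !gmul_assoc.
    rewrite (gmul_assoc _ (zpow c s)), (commute_zpowl _ _ s (commute_npowr _ _ m Hcx)).
    now rewrite <- gmul_assoc.
Qed.

Lemma comm_npow x y s m n :
  commute c x -> commute c y -> comm x y = zpow c s ->
  comm (npow x m) (npow y n) = zpow c (Z.of_nat m * Z.of_nat n * s).
Proof.
  intros Hcx Hcy Hxy; apply comm_eq_iff in Hxy.
  apply comm_eq_iff.
  replace (Z.of_nat m * Z.of_nat n * s) with (Z.of_nat n * (Z.of_nat m * s)) by ring.
  apply mul_npowr_swap, npowl_mul_swap; assumption.
Qed.

End CentralCommutator.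
End GroupFacts.

Section LeftQuasiOrder.
Context {G : Group} {le : G -> G -> Prop}.
Hypothesis Hle : left_quasi_order le.
Local Infix "·" := (@gmul G) (at level 40, left associativity).

Lemma lqo_total x y : le x y \/ le y x.
Proof. apply Hle. Qed.

Lemma lqo_trans x y z : le x y -> le y z -> le x z.
Proof. apply Hle. Qed.

Lemma lqo_mull f x y : le x y -> le (f · x) (f · y).
Proof. apply Hle. Qed.

Lemma lqo_refl x : le x x.
Proof. now destruct (lqo_total x x). Qed.

Lemma lqo_invg x y : commute x y -> le x y -> le (ginv y) (ginv x).
Proof.
  intros Hxy H; pose proof (lqo_mull (ginv y · ginv x) _ _ H) as H'.
  rewrite <- !gmul_assoc, gmul_Vl, gmul_1r in H'.
  rewrite (commute_sym _ _ (commute_invr _ _ (commute_sym _ _ Hxy))), mulKg in H'.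
  exact H'.
Qed.

Variable c : G.

Definition between x i j := le (zpow c i) x /\ le x (zpow c j).

Lemma between_mul x y i j i' j' :
  commute c x -> between x i j -> between y i' j' -> between (x · y) (i + i') (j + j').
Proof.
  intros Hcx [Hix Hxj] [Hiy Hyj]; split.
  - rewrite Z.add_comm, zpow_add.
    apply (lqo_trans _ (zpow c i' · x)); [now apply lqo_mull |].
    rewrite (commute_zpowl _ _ i' Hcx); now apply lqo_mull.
  - rewrite Z.add_comm, zpow_add.
    apply (lqo_trans _ (zpow c j' · x)); [| now apply lqo_mull].
    rewrite (commute_zpowl _ _ j' Hcx); now apply lqo_mull.
Qed.

Lemma between_inv x i j :
  commute c x -> between x i j -> between (ginv x) (- j) (- i).
Proof.
  intros Hcx [Hix Hxj]; unfold between; rewrite !zpow_opp; split.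
  - apply lqo_invg; [apply commute_sym, commute_zpowl, Hcx | exact Hxj].
  - apply lqo_invg; [apply commute_zpowl, Hcx | exact Hix].
Qed.

Lemma between_npow x i j n :
  commute c x -> between x i j -> between (npow x n) (Z.of_nat n * i) (Z.of_nat n * j).
Proof.
  intros Hcx Hx; induction n as [|n IHn].
  - split; apply lqo_refl.
  - replace (Z.of_nat (S n) * i) with (i + Z.of_nat n * i) by lia.
    replace (Z.of_nat (S n) * j) with (j + Z.of_nat n * j) by lia.
    now apply between_mul.
Qed.

Lemma between_comm x y i j i' j' :
  commute c x -> commute c y -> between x i j -> between y i' j' ->
  between (comm x y) (- ((j - i) + (j' - i'))) ((j - i) + (j' - i')).
Proof.
  intros Hcx Hcy Hx Hy.
  assert (Hcx' : commute c (ginv x)) by now apply commute_invr.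
  assert (Hcy' : commute c (ginv y)) by now apply commute_invr.
  assert (H : between (comm x y) (- j + - j' + i + i') (- i + - i' + j + j')).
  { unfold comm.
    apply between_mul; [repeat apply commute_mulr; assumption | | exact Hy].
    apply between_mul; [apply commute_mulr; assumption | | exact Hx].
    apply between_mul; [assumption | |]; now apply between_inv. }
  replace (- ((j - i) + (j' - i'))) with (- j + - j' + i + i') by ring.
  replace ((j - i) + (j' - i')) with (- i + - i' + j + j') by ring.
  exact H.
Qed.

Lemma not_much_less_between x :
  commute c x -> ~ much_less le c x ->
  exists i j, between x i j /\ ~ le (zpow c (j - i)) gone.
Proof.
  intros Hcx Hnot; unfold much_less in Hnot.
  apply not_or_and in Hnot as [Hpos Hneg].
  apply not_all_ex_not in Hpos as [k1 Hk1].
  apply not_all_ex_not in Hneg as [k2 Hk2].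
  assert (Hlower : le (zpow c (- k2)) x).
  { destruct (lqo_total (zpow c k2) (ginv x)) as [H | H]; [contradiction |].
    rewrite <- (invgK x), zpow_opp.
    apply lqo_invg; [apply commute_sym, commute_zpowl, commute_invr, Hcx | exact H]. }
  exists (- k2), k1; split.
  - split; [exact Hlower |].
    destruct (lqo_total (zpow c k1) x) as [H | H]; [contradiction | exact H].
  - intros H; apply Hk1, (lqo_trans _ (zpow c (- k2))); [| exact Hlower].
    pose proof (lqo_mull (zpow c (- k2)) _ _ H) as H'.
    rewrite <- zpow_add, gmul_1r in H'.
    now replace (- k2 + (k1 - - k2)) with k1 in H' by ring.
Qed.

Lemma zpow_le_dichotomy K :
  ~ le (zpow c K) gone ->
  (forall i j, le (zpow c i) (zpow c j) -> i <= j) \/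
  (forall i j, le (zpow c i) (zpow c j) -> j <= i).
Proof.
  intros HK; apply (Zpreorder_dichotomy _ K).
  - intros i j; apply lqo_total.
  - intros i j k; apply lqo_trans.
  - intros k i j H; rewrite !zpow_add; now apply lqo_mull.
  - exact HK.
Qed.

End LeftQuasiOrder.

Theorem lemma5p1 (G : Group) (le : G -> G -> Prop) (a b c : G) (r : Z) :
  left_quasi_order le ->
  r <> 0%Z ->
  comm a b = zpow c r ->
  gmul c a = gmul a c ->
  gmul c b = gmul b c ->
  much_less le c a \/ much_less le c b.
Proof.
  intros Hle Hr Hab Hca Hcb.
  destruct (classic (much_less le c a)) as [Ha | Ha]; [now left |].
  destruct (classic (much_less le c b)) as [Hb | Hb]; [now right |].
  exfalso.
  destruct (not_much_less_between Hle c a Hca Ha) as (i & j & Ha_bd & HK).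
  destruct (not_much_less_between Hle c b Hcb Hb) as (i' & j' & Hb_bd & _).
  set (M := (j - i) + (j' - i')).
  set (N := Z.to_nat (Z.abs M + 1)).
  assert (HN : Z.of_nat N = Z.abs M + 1) by (apply Z2Nat.id; lia).
  destruct (between_comm Hle c _ _ _ _ _ _ (commute_npowr _ _ N Hca) (commute_npowr _ _ N Hcb)
              (between_npow Hle c _ _ _ N Hca Ha_bd) (between_npow Hle c _ _ _ N Hcb Hb_bd))
    as [Hlo Hhi].
  rewrite (comm_npow c a b r N N Hca Hcb Hab) in Hlo, Hhi.
  replace (Z.of_nat N * j - Z.of_nat N * i + (Z.of_nat N * j' - Z.of_nat N * i'))
    with (Z.of_nat N * M) in Hlo, Hhi by (unfold M; ring).
  pose proof (Zabs_linear_lt_quadratic (Z.of_nat N) M r Hr ltac:(lia)) as Hdom.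
  destruct (zpow_le_dichotomy Hle c _ HK) as [Hmono | Hmono];
    apply Hmono in Hlo, Hhi; lia.
Qed.
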